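(* Let $P\subseteq\mathbb{R}^m$ and $Q\subseteq\mathbb{R}^n$, let $\ell\le m$ and $\ell'\le n$ be positive integers with $m-\ell=n-\ell'$, and let $I=\{1,\dots,\ell\}$ and $I'=\{1,\dots,\ell'\}$. Let $g:\mathbb{R}^\ell\to\mathbb{R}^{\ell'}$ be an integral affine transformation, and define $f:\mathbb{R}^m\to\mathbb{R}^n$ by $f(x)=(g(x^1),x^2)$ where $x=(x^1,x^2)$ with $x^1\in\mathbb{R}^\ell$, $x^2\in\mathbb{R}^{m-\ell}$. If $f(P)\subseteq Q$, then for every integer $k\ge 1$, \[f\big(\mathrm{SC}^k(P,I)\big)\subseteq \mathrm{SC}^k(Q,I').\]
   Context: An integral affine transformation $g:\mathbb{R}^\ell\to\mathbb{R}^{\ell'}$ is a map $g(x)=Vx+v$ with $V$ an integral $\ell'\times\ell$ matrix and $v\in\mathbb{Z}^{\ell'}$. For $(\pi,\pi_0)\in\mathbb{Z}^n\times\mathbb{Z}$, the split set is $S(\pi,\pi_0)=\{x\in\mathbb{R}^n:\pi_0<\pi^Tx<\pi_0+1\}$. For $J\subseteq\{1,\dots,n\}$, $\mathcal{S}_n(J)$ is the family of split sets $S(\pi,\pi_0)$ with $\pi\in\mathbb{Z}^n$, $\pi_j=0$ for $j\notin J$, $\pi_0\in\mathbb{Z}$. For $X\subseteq\mathbb{R}^n$, $\mathrm{SC}(X,J)=\bigcap_{S\in\mathcal{S}_n(J)}\mathrm{conv}(X\setminus S)$, $\mathrm{SC}^1(X,J)=\mathrm{SC}(X,J)$ and $\mathrm{SC}^k(X,J)=\mathrm{SC}(\mathrm{SC}^{k-1}(X,J),J)$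 for $k\ge2$. *)

From HB Require Import structures.
From mathcomp Require Import all_boot all_order all_algebra.
From mathcomp Require Import boolp classical_sets reals.
Set Implicit Arguments. Unset Strict Implicit. Unset Printing Implicit Defensive.
Import Order.TTheory GRing.Theory Num.Theory.
Local Open Scope ring_scope.
Local Open Scope classical_set_scope.

(* Points of R^n are row vectors 'rV[R]_n; coordinates are indexed by 'I_n
   (coordinate j+1 of the paper is index j here). *)

Definition conv (R : realType) (n : nat) (X : set 'rV[R]_n) : set 'rV[R]_n :=
  [set y | exists (k : nat) (x : 'I_k -> 'rV[R]_n) (lam : 'I_k -> R),
      (forall i, X (x i)) /\ (forall i, 0 <= lam i) /\
      \sum_(i < k) lam i = 1 /\ y = \sum_(i < k) lam i *: x i].

Definition split_set (R : realType) (n : nat) (pi : 'rV[int]_n) (pi0 : int)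
  : set 'rV[R]_n :=
  [set x | pi0%:~R < \sum_(i < n) (pi ord0 i)%:~R * x ord0 i < pi0%:~R + 1].

Definition SC (R : realType) (n : nat) (X : set 'rV[R]_n) (J : {set 'I_n})
  : set 'rV[R]_n :=
  [set y | forall (pi : 'rV[int]_n) (pi0 : int),
      (forall j, j \notin J -> pi ord0 j = 0) ->
      conv (X `\` @split_set R n pi pi0) y].

Definition SCk (R : realType) (n : nat) (k : nat) (X : set 'rV[R]_n)
  (J : {set 'I_n}) : set 'rV[R]_n :=
  iter k (fun Y => SC Y J) X.

(* The integral affine map g(x) = V x + v (written for row vectors). *)
Definition int_affine (R : realType) (l l' : nat) (V : 'M[int]_(l', l))
  (v : 'rV[int]_l') (x : 'rV[R]_l) : 'rV[R]_l' :=
  x *m (map_mx (fun z : int => z%:~R) V)^T + map_mx (fun z : int => z%:~R) v.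

Definition lift_affine (R : realType) (l l' d : nat) (V : 'M[int]_(l', l))
  (v : 'rV[int]_l') (x : 'rV[R]_(l + d)) : 'rV[R]_(l' + d) :=
  row_mx (int_affine V v (lsubmx x)) (rsubmx x).

Definition first_coords (l d : nat) : {set 'I_(l + d)} :=
  [set i : 'I_(l + d) | (i < l)%N].

From HB Require Import structures.
From mathcomp Require Import all_boot all_order all_algebra.
From mathcomp Require Import boolp classical_sets reals.
From mathcomp Require Import zify lra.
Local Open Scope ring_scope.
Local Open Scope classical_set_scope.
Import GRing.Theory Num.Theory.

(* An integral affine map h(x) = x M^T + b commutes with convex combinations
   and pulls the split set S(pi, pi0) back to the split set
   S(pi M, pi0 - pi b^T).  Hence h maps conv (X minus the pulled-back split)
   into conv (Y minus S(pi, pi0)), so h(SC(X, J)) lies in SC(Y, J') as soon as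
   pi |-> pi M sends directions supported in J' to directions supported in J;
   induction on k gives the same for SC^k.  The lifted map f is integral affine
   with matrix diag(V, 1) and translation (v, 0), and diag(V, 1) sends
   directions supported on the first l' coordinates to directions supported on
   the first l ones. *)

Definition supported_in {n} (J : {set 'I_n}) (pi : 'rV[int]_n) :=
  forall j, j \notin J -> pi ord0 j = 0.

Section IntegralAffineMaps.
Variable R : realType.

Local Notation intr_mx A := (map_mx (fun z : int => (z%:~R : R)) A).

Lemma int_affine_convex_comb m n (M : 'M[int]_(n, m)) (b : 'rV[int]_n)
    k (xs : 'I_k -> 'rV[R]_m) (lam : 'I_k -> R) :
  \sum_(i < k) lam i = 1 ->
  int_affine M b (\sum_(i < k) lam i *: xs i) =
  \sum_(i < k) lam i *: int_affine M b (xs i).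
Proof.
move=> lam1; rewrite /int_affine mulmx_suml.
under [RHS]eq_bigr do rewrite scalerDr scalemxAl.
by rewrite big_split /= -scaler_suml lam1 scale1r.
Qed.

Lemma conv_int_affine m n (M : 'M[int]_(n, m)) (b : 'rV[int]_n)
    (X : set 'rV[R]_m) (Y : set 'rV[R]_n) :
  (forall x, X x -> Y (int_affine M b x)) ->
  forall x, conv X x -> conv Y (int_affine M b x).
Proof.
move=> XY _ [k [xs [lam [Xxs [lam_ge0 [lam1 ->]]]]]].
exists k, (int_affine M b \o xs), lam; do !split => //.
- by move=> i; apply: XY.
- exact: int_affine_convex_comb.
Qed.

Lemma split_set_int_affine m n (M : 'M[int]_(n, m)) (b : 'rV[int]_n)
    (pi : 'rV[int]_n) (pi0 : int) (x : 'rV[R]_m) :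
  split_set pi pi0 (int_affine M b x) =
  split_set (pi *m M) (pi0 - (pi *m b^T) ord0 ord0) x.
Proof.
have dotE p (q : 'rV[int]_p) (z : 'rV[R]_p) :
    \sum_(i < p) (q ord0 i)%:~R * z ord0 i = (intr_mx q *m z^T) ord0 ord0.
  by rewrite !mxE; apply: eq_bigr => i _; rewrite !mxE.
rewrite /split_set /int_affine /= !dotE linearD /= trmx_mul trmxK.
rewrite mulmxDr mulmxA map_trmx -!map_mxM [in LHS]mxE.
rewrite [X in _ + X]mxE intrB.
set s := (_ *m _) ord0 ord0; set c := _%:~R.
by apply/propext; split=> /andP[lo hi]; apply/andP; split; lra.
Qed.

Lemma SC_int_affine m n (M : 'M[int]_(n, m)) (b : 'rV[int]_n)
    (J : {set 'I_m}) (J' : {set 'I_n}) (X : set 'rV[R]_m) (Y : set 'rV[R]_n) :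
  (forall pi, supported_in J' pi -> supported_in J (pi *m M)) ->
  (forall x, X x -> Y (int_affine M b x)) ->
  forall x, SC X J x -> SC Y J' (int_affine M b x).
Proof.
move=> suppM XY x SCx pi pi0 supp_pi.
apply: conv_int_affine (SCx _ (pi0 - (pi *m b^T) ord0 ord0) (suppM _ supp_pi)).
by move=> z [Xz notSz]; split; [apply: XY | rewrite split_set_int_affine].
Qed.

Lemma SCk_int_affine m n (M : 'M[int]_(n, m)) (b : 'rV[int]_n)
    (J : {set 'I_m}) (J' : {set 'I_n}) (X : set 'rV[R]_m) (Y : set 'rV[R]_n) k :
  (forall pi, supported_in J' pi -> supported_in J (pi *m M)) ->
  (forall x, X x -> Y (int_affine M b x)) ->
  forall x, SCk k X J x -> SCk k Y J' (int_affine M b x).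
Proof.
move=> suppM XY; elim: k => [|k IH] //=.
exact: SC_int_affine suppM IH.
Qed.

End IntegralAffineMaps.

Lemma supported_in_first_coords n1 n2 (pi : 'rV[int]_(n1 + n2)) :
  supported_in (first_coords n1 n2) pi <-> rsubmx pi = 0.
Proof.
split=> [supp | pi_r0 j].
  apply/matrixP=> i j; rewrite !mxE ord1; apply: supp.
  by rewrite inE /= -leqNgt leq_addr.
rewrite inE /= -leqNgt => n1_le_j.
have j_off : (j - n1 < n2)%N by have := ltn_ord j; lia.
have -> : j = rshift n1 (Ordinal j_off) by apply/val_inj => /=; lia.
by rewrite -[pi]hsubmxK pi_r0 row_mxEr mxE.
Qed.

Section LiftedAffineMap.
Variables (R : realType) (l l' d : nat) (V : 'M[int]_(l', l)) (v : 'rV[int]_l').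

Lemma lift_affineE (x : 'rV[R]_(l + d)) :
  lift_affine V v x = int_affine (block_mx V 0 0 1%:M) (row_mx v 0) x.
Proof.
rewrite /lift_affine /int_affine -[x in RHS]hsubmxK.
rewrite map_block_mx tr_block_mx mul_row_block map_row_mx add_row_mx.
by rewrite !map_mx0 map_mx1 !trmx0 trmx1 !mulmx0 mulmx1 !addr0 add0r.
Qed.

Lemma supported_in_lift_mx (pi : 'rV[int]_(l' + d)) :
  supported_in (first_coords l' d) pi ->
  supported_in (first_coords l d) (pi *m block_mx V 0 0 1%:M).
Proof.
move/supported_in_first_coords=> pi_r0; apply/supported_in_first_coords.
by rewrite -[pi]hsubmxK pi_r0 mul_row_block !mulmx0 mul0mx !addr0 row_mxKr.
Qed.

End LiftedAffineMap.

Theorem theorem2 (R : realType) (l l' d : nat) (hl : (0 < l)%N) (hl' : (0 < l')%N)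
  (P : set 'rV[R]_(l + d)) (Q : set 'rV[R]_(l' + d))
  (V : 'M[int]_(l', l)) (v : 'rV[int]_l')
  (hPQ : forall x, P x -> Q (@lift_affine R l l' d V v x))
  (k : nat) (hk : (1 <= k)%N) :
  forall x, SCk k P (first_coords l d) x ->
    SCk k Q (first_coords l' d) (@lift_affine R l l' d V v x).
Proof.
move=> x; rewrite lift_affineE; apply: SCk_int_affine x.
- exact: supported_in_lift_mx.
- by move=> x; rewrite -lift_affineE; apply: hPQ.
Qed.
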